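(* Let $p\in[0,1]$, $m\ge1$, $n\ge 2$, let $x_1\le\dots\le x_m$ be integers and $y_1\le\dots\le y_n$ be elements of $\mathbb Z':=\mathbb Z+\tfrac12$. Let $\mathbf X=(X_1,\dots,X_m)$ be an $m$-dimensional $p$-simple coalescing random walk on $\mathbb Z$ started at $(x_1,\dots,x_m)$ and $\mathbf Y=(Y_1,\dots,Y_n)$ an $n$-dimensional $(1-p)$-simple coalescing random walk on $\mathbb Z'$ started at $(y_1,\dots,y_n)$. For $1\le i\le m$, $1\le j\le n-1$ put $I^{\rightarrow}_{ij}(t):=1\{X_i(t)\in(y_j,y_{j+1}]\}$ and $I^{\leftarrow}_{ij}(t):=1\{x_i\in(Y_j(t),Y_{j+1}(t)]\}$. Then for every $t\ge0$ the random arrays $(I^{\rightarrow}_{ij}(t))_{i,j}$ and $(I^{\leftarrow}_{ij}(t))_{i,j}$ have the same joint distribution.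
   Context: A $p$-simple random walk on $\mathbb Z$ (resp. on $\mathbb Z'=\mathbb Z+\frac12$) is a continuous-time random walk that jumps at rate $1$, each jump going to the right neighbour with probability $p$ and to the left neighbour with probability $1-p$. An $m$-dimensional $p$-simple coalescing random walk started at ordered points $x_1\le\dots\le x_m$ is the system of $m$ indexed particles in which free particles perform independent $p$-simple random walks; whenever two particles occupy the same site, the particle of higher index becomes attached to the particle of lower index and thereafter moves together with it (particles starting at the same site are attached from time $0$). Notation: $1\{B\}$ is the indicator of $B$. *)

From HB Require Import structures.
From mathcomp Require Import all_boot all_order all_algebra.
From mathcomp Require Import all_classical all_reals all_analysis.
Set Implicit Arguments. Unset Strict Implicit. Unset Printing Implicit Defensive.
Import Order.TTheory GRing.Theory Num.Theory.
Import numFieldNormedType.Exports.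
Local Open Scope ring_scope.

(* Configuration of an m-dimensional coalescing walk: positions of the m
   indexed particles (positions live in R; on Z or on Z' = Z + 1/2). *)

Definition is_leader (R : realType) (m : nat) (z : 'I_m -> R) (i : 'I_m) : bool :=
  [forall j : 'I_m, (j < i)%N ==> (z j != z i)].

(* one step of the uniformized chain: choice c = (i, b); if i is a leader,
   its whole cluster (all particles on its site) jumps right (b = true)
   or left (b = false); otherwise nothing happens *)
Definition cstep (R : realType) (m : nat) (z : 'I_m -> R) (c : 'I_m * bool)
  : 'I_m -> R :=
  if is_leader z c.1 then
    fun j => if z j == z c.1 then z j + (if c.2 then 1 else -1) else z j
  else z.

Definition cweight (R : realType) (p : R) (m : nat) (c : 'I_m * bool) : R :=
  m%:R^-1 * (if c.2 then p else 1 - p).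

Definition kstep_prob (R : realType) (p : R) (m : nat) (x : 'I_m -> R) (k : nat)
  (E : ('I_m -> R) -> bool) : R :=
  \sum_(s : k.-tuple ('I_m * bool))
     (\prod_(c <- s) cweight p c) * (E (foldl (@cstep R m) x s))%:R.

(* P(E(Z(t))) where Z is the m-dimensional p-simple coalescing random walk
   started at x (each free particle / cluster jumps at rate 1), computed by
   uniformization with a Poisson(m t) number of steps of the embedded chain. *)
Definition crw_prob (R : realType) (p t : R) (m : nat) (x : 'I_m -> R)
  (E : ('I_m -> R) -> bool) : R :=
  limn (series (fun k : nat =>
     expR (- (m%:R * t)) * (m%:R * t) ^+ k / (k`!)%:R * kstep_prob p x k E)).

(* successor index (only used for j.+1 < n) *)
Definition nextI (n : nat) (j : 'I_n) : 'I_n := insubd j j.+1.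

(* Uniformization writes P(E(Z(t))) as a Poisson mixture of the powers of the
   embedded transition operator P = 1 + L/m, where L is the generator of the
   coalescing walk; expanding (1 + L/m)^k binomially and summing the Poisson
   weights gives the exponential series Σ_j t^j/j! (L^j 1_E)(x).  Duality thus
   reduces to the generator identity
     L_X H(., Y) (X) = L'_Y H(X, .) (Y),   H(X, Y) = 1{the events match A},
   where L' is the generator of the (1-p)-walk.  A jump of an X-cluster from a
   to a ± 1 changes H only if it crosses a Y-site a ± 1/2, and then its effect
   is exactly that of the opposite jump of the Y-cluster on that site, which
   happens at the same rate.  Generators acting on different variables commute,
   so the identity iterates to every power L^j. *)
From HB Require Import structures.
From mathcomp Require Import all_boot all_order all_algebra.
From mathcomp Require Import all_classical all_reals all_analysis.
From mathcomp Require Import ring lra zify.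
Import Order.TTheory GRing.Theory Num.Theory.
Import numFieldNormedType.Exports.
Local Open Scope classical_set_scope.
Local Open Scope ring_scope.
Set Implicit Arguments. Unset Strict Implicit. Unset Printing Implicit Defensive.

Lemma big_tuple_cons (V : nmodType) (T : finType) k (F : k.+1.-tuple T -> V) :
  \sum_(s : k.+1.-tuple T) F s =
  \sum_(c : T) \sum_(s : k.-tuple T) F [tuple of c :: s].
Proof.
rewrite pair_big /=.
rewrite (reindex (fun cs : T * k.-tuple T => [tuple of cs.1 :: cs.2])) //=.
exists (fun s : k.+1.-tuple T => (thead s, [tuple of behead s])) => [[c s]|s] _ /=.
  by congr pair; apply: val_inj.
by apply: val_inj => /=; rewrite [in RHS](tuple_eta s).
Qed.

Section Generator.
Variable R : realType.
Implicit Types (p : R) (m : nat).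

Definition transition p m (f : ('I_m -> R) -> R) (z : 'I_m -> R) : R :=
  \sum_(c : 'I_m * bool) cweight p c * f (cstep z c).

Lemma kstep_probE p m k (E : ('I_m -> R) -> bool) (x : 'I_m -> R) :
  kstep_prob p x k E = iter k (@transition p m) (fun z => (E z)%:R) x.
Proof.
elim: k x => [|k IH] x.
  rewrite /kstep_prob (big_pred1 [tuple]) /=; last first.
    by move=> s; apply/esym/eqP; exact: tuple0.
  by rewrite big_nil mul1r.
rewrite iterS /transition /kstep_prob big_tuple_cons; apply: eq_bigr => c _.
rewrite -IH /kstep_prob mulr_sumr; apply: eq_bigr => s _.
by rewrite big_cons /= mulrA.
Qed.

Definition jump_rate p (b : bool) : R := if b then p else 1 - p.

Lemma jump_rate_ge0 p b : 0 <= p <= 1 -> 0 <= jump_rate p b.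
Proof. by case/andP=> p0 p1; case: b => /=; rewrite ?subr_ge0. Qed.

Lemma jump_rate_opp p b : jump_rate (1 - p) (~~ b) = jump_rate p b.
Proof. by case: b => /=; ring. Qed.

Definition generator p m (f : ('I_m -> R) -> R) (z : 'I_m -> R) : R :=
  \sum_(c : 'I_m * bool) jump_rate p c.2 * (f (cstep z c) - f z).

Lemma sum_jump_rate p m : \sum_(c : 'I_m * bool) jump_rate p c.2 = m%:R.
Proof.
rewrite -(pair_big xpredT xpredT (fun _ b => jump_rate p b)) /=.
rewrite (eq_bigr (fun _ => 1)); last first.
  by move=> i _; rewrite big_bool /= addrC subrK.
by rewrite sumr_const card_ord.
Qed.

Lemma transitionE p m f z : (0 < m)%N ->
  transition p f z = f z + m%:R^-1 * @generator p m f z.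
Proof.
move=> m_gt0; rewrite /transition /generator mulr_sumr.
have sum_fz : \sum_(c : 'I_m * bool) m%:R^-1 * jump_rate p c.2 * f z = f z.
  by rewrite -mulr_suml -mulr_sumr sum_jump_rate mulVf ?mul1r // pnatr_eq0 -lt0n.
rewrite -{1}sum_fz -big_split /=; apply: eq_bigr => c _.
rewrite /cweight /jump_rate; set u := (if _ then _ else _); ring.
Qed.

Lemma transition_sum p m N (a : nat -> R) (g : nat -> ('I_m -> R) -> R) z :
  transition p (fun z' => \sum_(j < N) a j * g j z') z =
  \sum_(j < N) a j * transition p (g j) z.
Proof.
rewrite /transition; under eq_bigr do rewrite mulr_sumr.
rewrite exchange_big /=; apply: eq_bigr => j _.
rewrite mulr_sumr; apply: eq_bigr => c _; ring.
Qed.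

Lemma binomial_sum_step (r : R) (G : nat -> R) k :
  \sum_(j < k.+1) 'C(k, j)%:R * r ^+ j * (G j + r * G j.+1) =
  \sum_(j < k.+2) 'C(k.+1, j)%:R * r ^+ j * G j.
Proof.
rewrite [RHS]big_ord_recl /= bin0 expr0 !mul1r.
under eq_bigr do rewrite mulrDr.
rewrite big_split /= big_ord_recl /= bin0 expr0 !mul1r -addrA; congr (_ + _).
under [in RHS]eq_bigr do rewrite binS natrD mulrDl mulrDl.
rewrite big_split /=; congr (_ + _).
  rewrite [RHS]big_ord_recr /= bin_small // mul0r mul0r addr0.
  by apply: eq_bigr => j _.
by apply: eq_bigr => j _; rewrite exprS /bump /= add1n; ring.
Qed.

Lemma iter_transition p m k f z : (0 < m)%N ->
  iter k (@transition p m) f z =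
  \sum_(j < k.+1) 'C(k, j)%:R * m%:R^-1 ^+ j * iter j (@generator p m) f z.
Proof.
move=> m_gt0; elim: k z => [|k IH] z; first by rewrite big_ord1 /= bin0 expr0 !mul1r.
rewrite iterS.
have -> : iter k (@transition p m) f = fun z' => \sum_(j < k.+1)
    ('C(k, j)%:R * m%:R^-1 ^+ j) * iter j (@generator p m) f z'.
  by apply: funext => z'; rewrite IH.
rewrite (transition_sum p k.+1 (fun j => 'C(k, j)%:R * m%:R^-1 ^+ j)
  (fun j => iter j (@generator p m) f)).
rewrite -(binomial_sum_step _ (fun j => iter j (@generator p m) f z)).
apply: eq_bigr => j _.
by rewrite transitionE // iterS.
Qed.

Lemma generator_bound p m f (M : R) : 0 <= p <= 1 ->
  (forall z, `|f z| <= M) -> forall z, `|@generator p m f z| <= 2 * m%:R * M.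
Proof.
move=> p01 f_le z; apply: le_trans (ler_norm_sum _ _ _) _.
apply: (@le_trans _ _ (\sum_(c : 'I_m * bool) jump_rate p c.2 * (2 * M))).
  apply: ler_sum => c _; rewrite normrM ger0_norm ?jump_rate_ge0 //.
  apply: ler_wpM2l; first exact: jump_rate_ge0.
  by apply: le_trans (ler_normB _ _) _; rewrite mulr2n mulrDl mul1r lerD.
by rewrite -mulr_suml sum_jump_rate mulrA [_ * 2]mulrC.
Qed.

Lemma iter_generator_bound p m f j z : 0 <= p <= 1 ->
  (forall z, `|f z| <= 1) -> `|iter j (@generator p m) f z| <= (2 * m%:R) ^+ j.
Proof.
move=> p01 f_le1; elim: j z => [|j IH] z /=; first by rewrite expr0.
by rewrite exprS; apply: generator_bound.
Qed.

Lemma eq_generator p m (f g : ('I_m -> R) -> R) z :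
  (forall c, f (cstep z c) = g (cstep z c)) -> f z = g z ->
  generator p f z = generator p g z.
Proof. by move=> fg fg0; apply: eq_bigr => c _; rewrite fg fg0. Qed.

Lemma eq_iter_generator_invariant p m (G : ('I_m -> R) -> Prop)
    (f g : ('I_m -> R) -> R) :
  (forall z c, G z -> G (cstep z c)) -> (forall z, G z -> f z = g z) ->
  forall k z, G z -> iter k (@generator p m) f z = iter k (@generator p m) g z.
Proof.
move=> G_step fg k; elim: k => [|k IH] z Gz /=; first exact: fg.
by apply: eq_generator => [c|]; apply: IH => //; apply: G_step.
Qed.

Lemma generatorC p q m n (G : ('I_m -> R) -> ('I_n -> R) -> R) X Y :
  generator p (fun X' => generator q (G X') Y) X =
  generator q (fun Y' => generator p (fun X' => G X' Y') X) Y.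
Proof.
rewrite /generator.
transitivity (\sum_(c : 'I_m * bool) \sum_(d : 'I_n * bool)
  jump_rate p c.2 * jump_rate q d.2 *
  (G (cstep X c) (cstep Y d) - G (cstep X c) Y - G X (cstep Y d) + G X Y)).
  apply: eq_bigr => c _; rewrite -sumrB mulr_sumr; apply: eq_bigr => d _; ring.
rewrite exchange_big; apply: eq_bigr => d _.
rewrite -sumrB mulr_sumr; apply: eq_bigr => c _; ring.
Qed.

Lemma generator_iterC p q m n k (G : ('I_m -> R) -> ('I_n -> R) -> R) X Y :
  generator p (fun X' => iter k (@generator q n) (G X') Y) X =
  iter k (@generator q n) (fun Y' => generator p (fun X' => G X' Y') X) Y.
Proof.
elim: k G Y => [|k IH] G Y //=.
rewrite (generatorC p q (fun X' Y' => iter k (@generator q n) (G X') Y')).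
by congr generator; apply: funext => Y'; exact: IH.
Qed.

End Generator.

Section HalfIntegers.
Variable R : realType.

Definition integral (r : R) := exists k : int, r = k%:~R.
Definition half_integral (r : R) := exists k : int, r = k%:~R + 2^-1.

Lemma integral_jump (b : bool) (r : R) :
  integral r -> integral (r + (if b then 1 else -1)).
Proof.
by move=> [k ->]; case: b; [exists (k + 1); rewrite intrD | exists (k - 1); rewrite intrB].
Qed.

Lemma half_integral_jump (b : bool) (r : R) :
  half_integral r -> half_integral (r + (if b then 1 else -1)).
Proof.
move=> [k ->]; case: b.
  by exists (k + 1); rewrite intrD; ring.
by exists (k - 1); rewrite intrB; ring.
Qed.

Definition half_shift (b : bool) : R := if b then 2^-1 else - 2^-1.

Lemma half_shift_opp (b : bool) (r s : R) :
  (s == r + half_shift (~~ b)) = (r == s + half_shift b).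
Proof.
by case: b => /=; [rewrite eq_sym subr_eq | rewrite [RHS]eq_sym subr_eq].
Qed.

(* Every point of Z/2 is written [half z], so that comparisons between
   integers and half-integers become linear integer arithmetic. *)
Let half (z : int) : R := z%:~R / 2.

Let halfD a b : half a + half b = half (a + b).
Proof. by rewrite /half intrD mulrDl. Qed.
Let halfN a : - half a = half (- a).
Proof. by rewrite /half intrN mulNr. Qed.
Let ltr_half a b : (half a < half b) = (a < b).
Proof. by rewrite /half ltr_pM2r ?invr_gt0 ?ltr0n // ltr_int. Qed.
Let eqr_half a b : (half a == half b) = (a == b).
Proof. by rewrite /half (can_eq (mulfK _)) ?eqr_int // pnatr_eq0. Qed.
Let intr_half (k : int) : k%:~R = half (2 * k).
Proof. by rewrite /half intrM [_ * k%:~R]mulrC mulfK // intr_eq0. Qed.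
Let half_intr_half (k : int) : k%:~R + 2^-1 = half (2 * k + 1).
Proof.
by rewrite /half intrD intrM mulrDl [_ * k%:~R]mulrC mulfK ?pnatr_eq0 // mul1r.
Qed.
Let half2 : 1 = half 2.
Proof. by rewrite /half divff ?pnatr_eq0. Qed.
Let half1 : 2^-1 = half 1.
Proof. by rewrite /half mul1r. Qed.

Local Ltac half_simpl :=
  rewrite ?half1 ?half2 ?halfN ?halfD ?halfN ?halfD ?ltr_half ?eqr_half.

Lemma lt_jump_matched b (xi yj a : R) :
  integral xi -> half_integral yj -> integral a ->
  (yj < (if xi == a then xi + (if b then 1 else -1) else xi)) =
  ((if yj == a + half_shift b then yj + (if ~~ b then 1 else -1) else yj) < xi).
Proof.
move=> [k ->] [l ->] [k0 ->]; rewrite half_intr_half !intr_half /half_shift.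
case: b => /=; half_simpl;
by case: ifP => /eqP ?; case: ifP => /eqP ?; half_simpl; apply/idP/idP => ?; lia.
Qed.

Lemma lt_jump_unmatched_left b (xi yj a : R) :
  integral xi -> half_integral yj -> integral a -> yj != a + half_shift b ->
  (yj < (if xi == a then xi + (if b then 1 else -1) else xi)) = (yj < xi).
Proof.
move=> [k ->] [l ->] [k0 ->]; rewrite half_intr_half !intr_half /half_shift.
case: b => /=; half_simpl => /eqP ?;
by case: ifP => /eqP ?; half_simpl; apply/idP/idP => ?; lia.
Qed.

Lemma lt_jump_unmatched_right b (xi yj s : R) :
  integral xi -> half_integral yj -> half_integral s -> xi != s + half_shift b ->
  ((if yj == s then yj + (if b then 1 else -1) else yj) < xi) = (yj < xi).
Proof.
move=> [k ->] [l ->] [k0 ->]; rewrite !half_intr_half intr_half /half_shift.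
case: b => /=; half_simpl => /eqP ?;
by case: ifP => /eqP ?; half_simpl; apply/idP/idP => ?; lia.
Qed.

End HalfIntegers.

Arguments half_shift {R} b.

Section CoalescingStep.
Variable R : realType.

Lemma cstep_not_leader k (z : 'I_k -> R) c : ~~ is_leader z c.1 -> cstep z c = z.
Proof. by move=> not_leader; rewrite /cstep (negbTE not_leader). Qed.

Lemma cstep_integral k (z : 'I_k -> R) c :
  (forall i, integral (z i)) -> forall i, integral (cstep z c i).
Proof.
move=> z_int i; rewrite /cstep; case: ifP => // _.
by case: ifP => _ //; apply: integral_jump.
Qed.

Lemma cstep_half_integral k (z : 'I_k -> R) c :
  (forall i, half_integral (z i)) -> forall i, half_integral (cstep z c i).
Proof.
move=> z_half i; rewrite /cstep; case: ifP => // _.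
by case: ifP => _ //; apply: half_integral_jump.
Qed.

Lemma unique_leader_at k (z : 'I_k -> R) s : (exists j, z j == s) ->
  exists j0, forall j, (is_leader z j && (z j == s)) = (j == j0).
Proof.
move=> [j1 zj1].
have [j0 zj0 j0_min] := @arg_minnP _ j1 (fun j => z j == s) (fun j : 'I_k => val j) zj1.
exists j0 => j; apply/idP/idP.
  case/andP => /forallP leader /eqP zj.
  have := j0_min j; rewrite zj eqxx => /(_ isT) le_j0j.
  rewrite -val_eqE /= eqn_leq le_j0j andbT leqNgt; apply/negP => lt_jj0.
  by have := leader j0; rewrite lt_jj0 /= zj (eqP zj0) eqxx.
move/eqP ->; rewrite zj0 andbT; apply/forallP => j'; apply/implyP => lt_j'j0.
apply/negP => /eqP zj'; have := j0_min j'; rewrite zj' zj0 => /(_ isT).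
by rewrite leqNgt lt_j'j0.
Qed.

End CoalescingStep.

Section Duality.
Variables (R : realType) (p : R) (m n : nat) (A : {ffun 'I_m * 'I_n -> bool}).

Definition crossing_event (X : 'I_m -> R) (Y : 'I_n -> R) : bool :=
  [forall ij : 'I_m * 'I_n, (ij.2.+1 < n)%N ==>
     (A ij == (Y ij.2 < X ij.1 <= Y (nextI ij.2)))].

Lemma eq_crossing_event X X' Y Y' :
  (forall i j, (Y j < X i) = (Y' j < X' i)) ->
  crossing_event X Y = crossing_event X' Y'.
Proof. by move=> lt_eq; apply: eq_forallb => ij; rewrite !leNgt !lt_eq. Qed.

Section OneJump.
Variables (X : 'I_m -> R) (Y : 'I_n -> R).
Hypotheses (X_int : forall i, integral (X i)) (Y_half : forall j, half_integral (Y j)).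

Let left_term (c : 'I_m * bool) := jump_rate p c.2 *
  ((crossing_event (cstep X c) Y)%:R - (crossing_event X Y)%:R).
Let right_term (d : 'I_n * bool) := jump_rate (1 - p) d.2 *
  ((crossing_event X (cstep Y d))%:R - (crossing_event X Y)%:R).

(* The jump c of an X-cluster is matched with the opposite jump d of the
   Y-cluster sitting half a step away in the direction of c. *)
Let matched (c : 'I_m * bool) (d : 'I_n * bool) :=
  [&& is_leader X c.1, is_leader Y d.1, d.2 == ~~ c.2 &
      Y d.1 == X c.1 + half_shift c.2].

Let left_term_matched c : left_term c = \sum_(d | matched c d) left_term c.
Proof.
case: c => i b; have [leader|not_leader] := boolP (is_leader X i); last first.
  rewrite big1; last by move=> d; rewrite /matched /= (negbTE not_leader).
  by rewrite /left_term cstep_not_leader // subrr mulr0.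
have [site|no_site] := pselect (exists j, Y j == X i + half_shift b).
  have [j0 j0E] := unique_leader_at site.
  rewrite (big_pred1 (j0, ~~ b)) // => -[j' b'].
  rewrite /matched /= leader /= xpair_eqE -j0E.
  by case: (b' == ~~ b); rewrite /= ?andbF ?andbT.
rewrite big_pred0; last first.
  move=> [j b']; rewrite /matched /=; apply/negP => /and4P [_ _ _ Yj].
  by apply: no_site; exists j.
rewrite /left_term /=; suff -> : crossing_event (cstep X (i, b)) Y = crossing_event X Y.
  by rewrite subrr mulr0.
apply: eq_crossing_event => i' j'; rewrite /cstep /= leader.
apply: lt_jump_unmatched_left => //.
by apply/negP => /eqP Yj'; apply: no_site; exists j'; rewrite Yj'.
Qed.

Let right_term_matched d : right_term d = \sum_(c | matched c d) right_term d.
Proof.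
case: d => j b; have [leader|not_leader] := boolP (is_leader Y j); last first.
  rewrite big1; last by move=> c; rewrite /matched /= (negbTE not_leader) andbF.
  by rewrite /right_term cstep_not_leader // subrr mulr0.
have [site|no_site] := pselect (exists i, X i == Y j + half_shift b).
  have [i0 i0E] := unique_leader_at site.
  rewrite (big_pred1 (i0, ~~ b)) // => -[i' b'].
  rewrite /matched /= leader /= xpair_eqE.
  have -> : (b == ~~ b') = (b' == ~~ b) by case: (b); case: (b').
  case: eqP => [->|] /=; last by rewrite !andbF.
  by rewrite andbT half_shift_opp -i0E.
rewrite big_pred0; last first.
  move=> [i b']; rewrite /matched /=; apply/negP => /and4P [_ _ /eqP b_opp Yj].
  by apply: no_site; exists i; move: Yj; rewrite b_opp half_shift_opp.
rewrite /right_term /=; suff -> : crossing_event X (cstep Y (j, b)) = crossing_event X Y.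
  by rewrite subrr mulr0.
apply: eq_crossing_event => i' j'; rewrite /cstep /= leader.
apply: lt_jump_unmatched_right => //.
by apply/negP => /eqP Xi'; apply: no_site; exists i'; rewrite Xi'.
Qed.

Let matched_terms c d : matched c d -> left_term c = right_term d.
Proof.
case: c d => [i b] [j b'] /and4P [/= leaderX leaderY /eqP -> /eqP Yj].
rewrite /left_term /right_term /= jump_rate_opp.
suff -> : crossing_event (cstep X (i, b)) Y = crossing_event X (cstep Y (j, ~~ b)) by [].
apply: eq_crossing_event => i' j'; rewrite /cstep /= leaderX leaderY Yj.
exact: lt_jump_matched.
Qed.

Lemma generator_dual :
  generator p (fun X' => (crossing_event X' Y)%:R) X =
  generator (1 - p) (fun Y' => (crossing_event X Y')%:R) Y.
Proof.
transitivity (\sum_(c : 'I_m * bool) left_term c) => //.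
transitivity (\sum_(c : 'I_m * bool) \sum_(d | matched c d) right_term d).
  by apply: eq_bigr => c _; rewrite left_term_matched; apply: eq_bigr => d /matched_terms.
rewrite (exchange_big_dep xpredT) //=.
transitivity (\sum_(d : 'I_n * bool) right_term d) => //.
by apply: eq_bigr => d _; rewrite [RHS]right_term_matched.
Qed.

End OneJump.

Lemma iter_generator_dual k (X : 'I_m -> R) (Y : 'I_n -> R) :
  (forall i, integral (X i)) -> (forall j, half_integral (Y j)) ->
  iter k (@generator R p m) (fun X' => (crossing_event X' Y)%:R) X =
  iter k (@generator R (1 - p) n) (fun Y' => (crossing_event X Y')%:R) Y.
Proof.
elim: k X Y => [|k IH] X Y X_int Y_half //.
rewrite iterS.
transitivity (generator p (fun X' =>
    iter k (@generator R (1 - p) n) (fun Y' => (crossing_event X' Y')%:R) Y) X).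
  by apply: eq_generator => [c|]; apply: IH => //; exact: cstep_integral.
rewrite generator_iterC iterSr.
apply: (@eq_iter_generator_invariant R (1 - p) n (fun z => forall j, half_integral (z j))).
- exact: cstep_half_integral.
- by move=> Y' Y'_half; exact: generator_dual.
- exact: Y_half.
Qed.

End Duality.

Section Poissonization.
Variable R : realType.

Lemma series_convolution (u v : R ^nat) N :
  series (fun k => \sum_(j < k.+1) u (k - j)%N * v j) N =
  \sum_(j < N) v j * series u (N - j)%N.
Proof.
elim: N => [|N IH]; first by rewrite seriesEord /= !big_ord0.
have series1 : series u 1 = u 0%N by rewrite seriesEord /= big_ord1.
rewrite seriesSr IH [RHS]big_ord_recr [X in _ + X]big_ord_recr /= subSnn subnn.
rewrite series1 addrA -big_split /= [v N * _]mulrC; congr (_ + _).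
apply: eq_bigr => j _.
by rewrite subSn ?(ltnW (ltn_ord j)) // seriesSr mulrDr [u _ * _]mulrC.
Qed.

Lemma series_convolution_sub_le (u v w : R ^nat) N :
  (forall n, series u n <= 1) -> (forall n, `|v n| <= w n) ->
  `|series (fun k => \sum_(j < k.+1) u (k - j)%N * v j) N - series v N|
    <= \sum_(j < N) w j * (1 - series u (N - j)%N).
Proof.
move=> u_le1 v_le; rewrite series_convolution.
have -> : series v N = \sum_(j < N) v j by rewrite seriesEord.
rewrite -sumrB.
apply: le_trans (ler_norm_sum _ _ _) _; apply: ler_sum => j _.
rewrite -{2}[v j]mulr1 -mulrBr normrM distrC [X in _ * X]ger0_norm ?subr_ge0 //.
by apply: ler_wpM2r; rewrite ?subr_ge0.
Qed.

Lemma series_convolution_sub_cvg0 (u v w : R ^nat) :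
  (forall n, 0 <= u n) -> series u @ \oo --> (1 : R) -> (forall n, series u n <= 1) ->
  (forall n, 0 <= w n) -> (forall n, `|v n| <= w n) -> cvgn (series w) ->
  (fun N => series (fun k => \sum_(j < k.+1) u (k - j)%N * v j) N - series v N)
    @ \oo --> 0.
Proof.
move=> u_ge0 u_cvg u_le1 w_ge0 v_le w_cvg.
set W := limn (series w).
have w_nd : nondecreasing_seq (series w).
  by apply: (@nondecreasing_series _ w xpredT 0) => k _ _.
have w_leW : forall N, series w N <= W by exact: nondecreasing_cvgn_le.
have W_ge0 : 0 <= W by apply: le_trans (w_leW 0%N); rewrite seriesEord /= big_ord0.
apply/cvgr0Pnorm_le => e e_gt0.
set e' := e / (W + 1).
have e'_gt0 : 0 < e' by rewrite divr_gt0 // ltr_pwDr.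
move/cvgrPdist_le: u_cvg => /(_ e' e'_gt0) [N1 _ N1_le].
move/cvgrPdist_le: w_cvg => /(_ e' e'_gt0) [N2 _ N2_le].
exists (N1 + N2)%N => // N /= le_N.
set a := (N - N1)%N; have -> : N = (a + N1)%N by rewrite /a subnK //; lia.
apply: le_trans (series_convolution_sub_le _ u_le1 v_le) _.
rewrite big_split_ord /=.
have head_le : \sum_(j < a) w (lshift N1 j) * (1 - series u (a + N1 - lshift N1 j)%N)
    <= W * e'.
  apply: (@le_trans _ _ (\sum_(j < a) w j * e')).
    apply: ler_sum => j _; apply: ler_wpM2l => //=.
    by apply: le_trans (ler_norm _) (N1_le _ _); have := ltn_ord j; rewrite /=; lia.
  rewrite -mulr_suml ler_wpM2r ?(ltW e'_gt0) //.
  by apply: le_trans _ (w_leW a); rewrite seriesEord.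
have tail_le : \sum_(i < N1) w (rshift a i) * (1 - series u (a + N1 - rshift a i)%N)
    <= e'.
  apply: (@le_trans _ _ (\sum_(i < N1) w (a + i)%N)).
    apply: ler_sum => i _; rewrite /= -[leRHS]mulr1; apply: ler_wpM2l => //.
    by rewrite gerBl seriesEord /=; apply: sumr_ge0 => k _.
  have -> : \sum_(i < N1) w (a + i)%N = series w (a + N1)%N - series w a.
    by rewrite !seriesEord /= big_split_ord /=; ring.
  apply: le_trans (lerB (w_leW _) (lexx _)) _.
  by apply: le_trans (ler_norm _) (N2_le _ _); rewrite /=; lia.
suff <- : W * e' + e' = e by exact: lerD.
by rewrite /e'; field; rewrite gt_eqF // ltr_pwDr.
Qed.

(* Mertens' theorem for the Cauchy product of a probability distribution u
   with an absolutely summable series v. *)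
Lemma limn_series_convolution (u v w : R ^nat) :
  (forall n, 0 <= u n) -> series u @ \oo --> (1 : R) -> (forall n, series u n <= 1) ->
  (forall n, 0 <= w n) -> (forall n, `|v n| <= w n) -> cvgn (series w) ->
  limn (series (fun k => \sum_(j < k.+1) u (k - j)%N * v j)) = limn (series v).
Proof.
move=> u_ge0 u_cvg u_le1 w_ge0 v_le w_cvg.
have v_cvg : cvgn (series v).
  by apply: normed_cvg; apply: (@series_le_cvg _ _ w) => // k; exact: normr_ge0.
set S := series _; apply/cvg_lim => //.
have -> : S = series v + (fun N => S N - series v N).
  by apply/funext => N /=; rewrite addrC subrK.
rewrite -[X in _ --> X]addr0; apply: cvgD => //.
exact: series_convolution_sub_cvg0 u_cvg u_le1 w_ge0 v_le w_cvg.
Qed.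

Lemma poisson_binomial_termE (r t : R) (c : nat -> R) k : r != 0 ->
  expR (- (r * t)) * (r * t) ^+ k / (k`!)%:R *
     \sum_(j < k.+1) 'C(k, j)%:R * r^-1 ^+ j * c j =
  \sum_(j < k.+1) (expR (- (r * t)) * exp_coeff (r * t) (k - j)%N) *
     (t ^+ j / (j`!)%:R * c j).
Proof.
move=> r_neq0; rewrite mulr_sumr; apply: eq_bigr => j _.
have le_jk : (j <= k)%N by rewrite -ltnS.
rewrite /exp_coeff /= -(bin_fact le_jk) !natrM.
rewrite -[k in (r * t) ^+ k](subnK le_jk) exprD !exprMn exprVn.
have binom_neq0 : 'C(k, j)%:R != 0 :> R by rewrite pnatr_eq0 -lt0n bin_gt0.
have fact_neq0 i : (i`!)%:R != 0 :> R by rewrite pnatr_eq0 -lt0n fact_gt0.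
by field; rewrite binom_neq0 !fact_neq0 expf_neq0.
Qed.

(* Uniformization at rate r: a Poisson(r t) number of steps of 1 + L / r
   amounts to the exponential series of t L. *)
Lemma limn_poisson_binomial (r t B : R) (c : nat -> R) :
  0 < r -> 0 <= t -> 0 <= B -> (forall j, `|c j| <= B ^+ j) ->
  limn (series (fun k => expR (- (r * t)) * (r * t) ^+ k / (k`!)%:R *
     \sum_(j < k.+1) 'C(k, j)%:R * r^-1 ^+ j * c j)) =
  limn (series (fun j => t ^+ j / (j`!)%:R * c j)).
Proof.
move=> r_gt0 t_ge0 B_ge0 c_le.
under eq_fun do rewrite poisson_binomial_termE ?gt_eqF //.
have poisson_series : series (fun i => expR (- (r * t)) * exp_coeff (r * t) i) =1
    (fun N => expR (- (r * t)) * series (exp_coeff (r * t)) N).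
  by move=> N; rewrite !seriesEord /= mulr_sumr.
apply: (@limn_series_convolution (fun i => expR (- (r * t)) * exp_coeff (r * t) i)
  (fun j => t ^+ j / (j`!)%:R * c j) (exp_coeff (B * t))).
- by move=> k; rewrite mulr_ge0 ?expR_ge0 ?exp_coeff_ge0 // mulr_ge0 // ltW.
- have -> : 1 = expR (- (r * t)) * expR (r * t) by rewrite mulrC expRxMexpNx_1.
  rewrite (eq_cvg _ _ poisson_series).
  exact: cvgMl_tmp (is_cvg_series_exp_coeff _).
- move=> N; rewrite poisson_series -(expRxMexpNx_1 (r * t)) [leRHS]mulrC.
  apply: ler_wpM2l; first exact: expR_ge0.
  apply: nondecreasing_cvgn_le; last exact: is_cvg_series_exp_coeff.
  apply: (@nondecreasing_series _ _ xpredT 0) => k _ _.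
  by rewrite exp_coeff_ge0 // mulr_ge0 // ltW.
- by move=> k; rewrite exp_coeff_ge0 // mulr_ge0.
- move=> k; rewrite /exp_coeff /= normrM ger0_norm ?divr_ge0 ?exprn_ge0 //.
  have -> : (B * t) ^+ k / (k`!)%:R = t ^+ k / (k`!)%:R * B ^+ k.
    by rewrite exprMn; ring.
  by rewrite ler_wpM2l ?divr_ge0 ?exprn_ge0.
- exact: is_cvg_series_exp_coeff.
Qed.

Lemma crw_probE (p t : R) m (x : 'I_m -> R) (E : ('I_m -> R) -> bool) :
  0 <= p <= 1 -> (0 < m)%N -> 0 <= t ->
  crw_prob p t x E =
  limn (series (fun j => t ^+ j / (j`!)%:R *
                         iter j (@generator R p m) (fun z => (E z)%:R) x)).
Proof.
move=> p01 m_gt0 t_ge0; rewrite /crw_prob.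
under eq_fun do rewrite kstep_probE iter_transition //.
apply: (@limn_poisson_binomial _ _ (2 * m%:R)); rewrite ?ltr0n ?mulr_ge0 //.
move=> j; apply: iter_generator_bound => // z.
by case: (E z); rewrite ?normr1 ?normr0.
Qed.

End Poissonization.

Theorem mainTheorem2 (R : realType) (p : R) (m n : nat)
  (x : 'I_m -> int) (y : 'I_n -> R) (t : R) :
  0 <= p <= 1 -> (1 <= m)%N -> (2 <= n)%N ->
  (forall i j : 'I_m, (i <= j)%N -> x i <= x j) ->
  (forall i j : 'I_n, (i <= j)%N -> y i <= y j) ->
  (forall j : 'I_n, exists k : int, y j = k%:~R + 2^-1) ->
  0 <= t ->
  forall A : {ffun 'I_m * 'I_n -> bool},
    crw_prob p t (fun i => (x i)%:~R)
      (fun X => [forall ij : 'I_m * 'I_n, (ij.2.+1 < n)%N ==>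
                  (A ij == (y ij.2 < X ij.1 <= y (nextI ij.2)))])
    =
    crw_prob (1 - p) t y
      (fun Y => [forall ij : 'I_m * 'I_n, (ij.2.+1 < n)%N ==>
                  (A ij == (Y ij.2 < (x ij.1)%:~R <= Y (nextI ij.2)))]).
Proof.
move=> p01 m_gt0 n_ge2 _ _ y_half t_ge0 A.
have p'01 : 0 <= 1 - p <= 1 by case/andP: p01 => p0 p1; apply/andP; split; lra.
rewrite !crw_probE // ?(leq_trans _ n_ge2) //.
congr (limn (series _)); apply: funext => j; congr (_ * _).
by apply: (iter_generator_dual p A) => // i; exists (x i).
Qed.
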